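(* Let $\mathbb{K}$ be a field of characteristic $0$ and let $L=\sum_{i=0}^{J}a_i(n)\sigma^i$, $a_i(n)\in\mathbb{K}[n]$, be nondegenerated. Then the continued zero index $C_L=0$.
   Context: $\sigma$ is the shift operator. The adjoint of $L$ acts on polynomials by $L^*(x(n))=\sum_{i=0}^J a_i(n-i)x(n-i)$. Put $b_k(n)=\sum_{j=k}^{J}\binom{j}{k}a_{J-j}(n+j-J)$ for $0\le k\le J$, $d=\deg L=\max_{0\le k\le J}\{\deg b_k(n)-k\}$, and $f(s)=\sum_{k=0}^{J}[n^{d+k}](b_k(n))\,s^{\underline{k}}$, where $[n^m](b)$ is the coefficient of $n^m$ in $b$ and $s^{\underline{k}}=s(s-1)\cdots(s-k+1)$. Let $R_L=\{s\in\mathbb{N}=\{0,1,2,\dots\}: f(s)=0\}$. $L$ is degenerated if $R_L\ne\emptyset$ and nondegenerated otherwise. Continued zero index $C_L$: if $L^*(1)\neq0$ then $C_L=0$; if $L^*(1)=0$ then $C_L$ is the positive integer with $L^*(n^{C_L})\neq 0$ and $L^*(n^i)=0$ for $0\le i\le C_L-1$. *)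

From HB Require Import structures.
From mathcomp Require Import all_boot all_order all_algebra.
Set Implicit Arguments. Unset Strict Implicit. Unset Printing Implicit Defensive.
Import Order.TTheory GRing.Theory Num.Theory.
Local Open Scope ring_scope.

(* The operator L = \sum_{i=0}^J a_i(n) sigma^i is given by J : nat and
   the coefficient family a : nat -> {poly K} (only a 0, ..., a J matter). *)

Section Defs.
Variable K : fieldType.

Definition shiftp (p : {poly K}) (c : K) : {poly K} := p \Po ('X + c%:P).

Definition adjointL (J : nat) (a : nat -> {poly K}) (x : {poly K}) : {poly K} :=
  \sum_(i < J.+1) shiftp (a i) (- i%:R) * shiftp x (- i%:R).

Definition bcoef (J : nat) (a : nat -> {poly K}) (k : nat) : {poly K} :=
  \sum_(k <= j < J.+1) 'C(j, k)%:R *: shiftp (a (J - j)%N) (j%:R - J%:R).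

Definition coefz (p : {poly K}) (m : int) : K :=
  match m with Posz m' => p`_m' | Negz _ => 0 end.

(* d = deg L = max_{0<=k<=J} (deg b_k - k), the maximum ranging over the
   nonzero b_k (deg 0 = -oo).  If all b_k vanish, d is irrelevant (f = 0). *)
Definition degL (J : nat) (a : nat -> {poly K}) : int :=
  \big[Num.max/(- (J%:Z))]_(k < J.+1 | bcoef J a k != 0)
     ((size (bcoef J a k))%:Z - 1 - k%:Z).

Definition fL (J : nat) (a : nat -> {poly K}) (s : nat) : K :=
  \sum_(k < J.+1) coefz (bcoef J a k) (degL J a + k%:Z) * (s ^_ k)%:R.

(* R_L = { s in N : f(s) = 0 }; L nondegenerated iff R_L is empty *)
Definition nondegenerated (J : nat) (a : nat -> {poly K}) : Prop :=
  forall s : nat, fL J a s != 0.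

Definition cont_zero_index (J : nat) (a : nat -> {poly K}) (c : nat) : Prop :=
  (adjointL J a 1 != 0 /\ c = 0%N) \/
  (adjointL J a 1 = 0 /\ (0 < c)%N /\ adjointL J a ('X ^+ c) != 0 /\
     forall i : nat, (i < c)%N -> adjointL J a ('X ^+ i) = 0).
End Defs.

From HB Require Import structures.
From mathcomp Require Import all_boot all_order all_algebra.
Import Order.TTheory GRing.Theory Num.Theory.
Local Open Scope ring_scope.

(* Since 0^{\underline k} = 0 for k > 0, f(0) is the single coefficient
   [n^d](b_0), and reversing the summation index (j = J - i) shows
   b_0 = L^*(1).  Hence L^*(1) = 0 would give f(0) = 0, i.e. 0 \in R_L. *)

Section NondegeneratedAdjoint.
Variables (K : fieldType) (J : nat) (a : nat -> {poly K}).

Lemma coefz0 (m : int) : coefz (0 : {poly K}) m = 0.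
Proof. by case: m => m /=; rewrite ?coef0. Qed.

Lemma bcoef0_adjointL1 : bcoef J a 0 = adjointL J a 1.
Proof.
rewrite /bcoef /adjointL big_mkord (reindex_inj rev_ord_inj) /=.
apply: eq_bigr => i _; have le_iJ : (i <= J)%N by rewrite -ltnS.
rewrite bin0 scale1r /shiftp comp_polyC mulr1 subSS subKn //.
by rewrite natrB // addrAC subrr add0r.
Qed.

Lemma fL0 : fL J a 0 = coefz (bcoef J a 0) (degL J a).
Proof.
rewrite /fL big_ord_recl ffactn0 mulr1 big1 ?addr0 // => k _.
by rewrite ffact0n mulr0.
Qed.

Lemma nondegenerated_adjointL1_neq0 : nondegenerated J a -> adjointL J a 1 != 0.
Proof.
move=> nondeg; apply: contraNneq (nondeg 0%N) => adj1_eq0.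
by rewrite fL0 bcoef0_adjointL1 adj1_eq0 coefz0.
Qed.

End NondegeneratedAdjoint.

Theorem lemma2p5 (K : fieldType) (J : nat) (a : nat -> {poly K}) :
  [pchar K] =i pred0 ->
  nondegenerated J a ->
  cont_zero_index J a 0.
Proof.
by move=> _ nondeg; left; split; first exact: nondegenerated_adjointL1_neq0.
Qed.
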